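(* There is an absolute constant $C>0$ such that for every $\varepsilon\in(0,1/2)$, every $m\geq1$ and every family of $m$ linear orders $\leq_1,\dots,\leq_m$ on a finite set $V$, the $(1/2-\varepsilon)$-majority digraph of $(\leq_1,\dots,\leq_m)$ has domination number at most $C/\varepsilon^2$.
   Context: For $c\in[0,1]$, the $c$-majority digraph of linear orders $\leq_1,\dots,\leq_m$ on $V$ is the digraph on $V$ with an arc $xy$ ($x\neq y$) whenever $|\{i\in[m]:x<_iy\}|\geq cm$. The domination number of a digraph is the minimum size of a set $X$ such that every vertex $v$ is in $X$ or has an in-neighbour in $X$. *)

From mathcomp Require Import all_boot all_order all_algebra.
From mathcomp Require Import reals.
Set Implicit Arguments. Unset Strict Implicit. Unset Printing Implicit Defensive.
Import Order.TTheory GRing.Theory Num.Theory.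

Definition linear_order (V : finType) (le : rel V) : Prop :=
  [/\ reflexive le, antisymmetric le, transitive le & total le].

Definition nb_below (V : finType) (m : nat) (ord : 'I_m -> rel V) (x y : V) : nat :=
  #|[set i : 'I_m | ord i x y && (x != y)]|.

Definition majority_arc (R : realType) (c : R) (V : finType) (m : nat)
  (ord : 'I_m -> rel V) : rel V :=
  fun x y => (x != y) && (c * m%:R <= (nb_below ord x y)%:R)%R.

Definition dominating (V : finType) (E : rel V) (X : {set V}) : bool :=
  [forall v, (v \in X) || [exists u in X, E u v]].

(* Domination number: minimum size of a dominating set (setT always dominates). *)
Definition domination_number (V : finType) (E : rel V) : nat :=
  \big[minn/#|V|]_(X : {set V} | dominating E X) #|X|.

From mathcomp Require Import all_boot all_order all_algebra.
From mathcomp Require Import reals.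
From mathcomp Require Import zify ring lra.
Import Order.TTheory GRing.Theory Num.Theory.
Set Implicit Arguments. Unset Strict Implicit. Unset Printing Implicit Defensive.
Local Open Scope ring_scope.

(* Score a candidate x against a vertex v by counting, over the m orders, 2 when
   x is ranked strictly below v and 1 for a tie; then score x v + score v x = 2m.
   Multiplicative weights over the vertices produce, for every r, a multiset of
   candidates against which every v scores on average at least (1 - 1/r) m.
   This multiset is halved repeatedly down to K = (24 r)^2 elements by keeping one
   element of each pair according to a sign vector: for each order the loss is a
   random +-1 walk indexed by ranks, whose maximum has expectation O(sqrt n) by
   Kolmogorov's maximal inequality, so the losses form a geometric series of total
   at most 24 m / sqrt K = m / r.  Some element of the final set then scores at
   least (1 - 2/r) m against v, i.e. lies below v in a (1/2 - 1/r)-fraction of the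
   orders, and taking 1/r < eps gives a dominating set of size O(1/eps^2). *)

Section Bernoulli.
Variable R : realFieldType.

Lemma bernoulli (x : R) n : 0 <= x -> 1 + n%:R * x <= (1 + x) ^+ n.
Proof.
move=> x_ge0; elim: n => [|n IH]; first by rewrite mul0r addr0 expr0.
have : 0 <= n%:R * x by rewrite mulr_ge0 ?ler0n.
by rewrite exprS -natr1; nra.
Qed.

Lemma bernoulli_inv (x : R) n : 0 <= x -> (1 - n%:R * x) * (1 + x) ^+ n <= 1.
Proof.
move=> x_ge0; elim: n => [|n IH]; first by rewrite mul0r subr0 expr0 mul1r.
have : 1 <= (1 + x) ^+ n.+1 by rewrite exprn_ege1 // lerDl.
have -> : (1 - n.+1%:R * x) * (1 + x) ^+ n.+1 =
    (1 + x) * ((1 - n%:R * x) * (1 + x) ^+ n) - x * (1 + x) ^+ n.+1.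
  by rewrite -natr1 exprS; ring.
nra.
Qed.

Lemma mul_pow_lt1 (theta x : R) r : 0 <= x -> r%:R * x < theta ->
  (1 - theta) * (1 + x) ^+ r < 1.
Proof.
move=> x_ge0 lt_theta; apply: lt_le_trans (bernoulli_inv r x_ge0).
by rewrite ltr_pM2r ?exprn_gt0 ?ltrBlDl; lra.
Qed.

Lemma pow_rate_lt (theta : R) r : 0 < theta -> (2 * r.+1%:R + 1) * theta < 1 ->
  (1 - theta + 2 * theta ^+ 2) ^+ r.+1 < (1 - theta) ^+ r.
Proof.
move=> theta_gt0 theta_small; have r_ge0 : 0 <= r%:R :> R := ler0n _ _.
have theta_lt1 : 0 < 1 - theta by rewrite -natr1 in theta_small; nra.
set a := 2 * theta ^+ 2 / (1 - theta).
have aE : a * (1 - theta) = 2 * theta ^+ 2 by rewrite divfK // lt0r_neq0.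
have a_ge0 : 0 <= a by apply: divr_ge0; [rewrite mulr_ge0 ?sqr_ge0 | exact: ltW].
have -> : 1 - theta + 2 * theta ^+ 2 = (1 - theta) * (1 + a) by rewrite -aE; ring.
rewrite exprMn exprSr -mulrA -[X in _ < X]mulr1 ltr_pM2l ?exprn_gt0 //.
apply: mul_pow_lt1 => //; rewrite -(ltr_pM2r theta_lt1) -mulrA aE.
by rewrite -natr1 in theta_small *; nra.
Qed.

Lemma inv_pow_le_quadratic (c M : R) (g : nat) : 0 <= c -> g%:R <= M ->
  ((1 + c) ^+ g)^-1 <= 1 - c * g%:R + M * c ^+ 2 * g%:R.
Proof.
move=> c_ge0 le_gM; set z := c * g%:R.
have z_ge0 : 0 <= z by rewrite mulr_ge0 ?ler0n.
have le_pow : 1 + z <= (1 + c) ^+ g by rewrite /z mulrC bernoulli.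
apply: (le_trans (y := 1 - z + z ^+ 2)).
  rewrite -[_^-1]mul1r ler_pdivrMr; last by apply: lt_le_trans le_pow; lra.
  have q_ge0 : 0 <= 1 - z + z ^+ 2 by nra.
  by apply: le_trans (ler_wpM2l q_ge0 le_pow); nra.
have : 0 <= (M - g%:R) * (g%:R * c ^+ 2).
  by rewrite mulr_ge0 ?subr_ge0 ?mulr_ge0 ?ler0n ?sqr_ge0.
rewrite /z; nra.
Qed.
End Bernoulli.

Lemma exists_pow_lt (R : realType) (rho N : R) : 0 < rho -> rho < 1 ->
  exists T0, forall T, (T0 <= T)%N -> N * rho ^+ T < 1.
Proof.
move=> rho_gt0 rho_lt1; set b := rho^-1 - 1.
have b_gt0 : 0 < b by rewrite subr_gt0 invf_gt1.
exists (Num.truncn (N / b)).+1 => T le_T0T.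
have lt_NT : N < T%:R * b.
  rewrite -ltr_pdivrMr //; apply: lt_le_trans (truncnS_gt _) _; by rewrite ler_nat.
have := bernoulli T (ltW b_gt0); rewrite {2}/b addrCA subrr addr0 => pow_ge.
have rT_gt0 : 0 < rho ^+ T by rewrite exprn_gt0.
rewrite -[1](mulVf (lt0r_neq0 rT_gt0)) ltr_pM2r // -exprVn; lra.
Qed.

Section InverseSquares.
Variable R : realFieldType.

Lemma inv_sqr_le_telescope (c y : R) : 0 <= c -> 1 <= y ->
  c / (y + 1) ^+ 2 <= c / y - c / (y + 1).
Proof.
move=> c_ge0 y_ge1.
have -> : c / y - c / (y + 1) = c / (y * (y + 1)).
  by field; apply/andP; split; rewrite gt_eqF //; lra.
by rewrite ler_wpM2l // lef_pV2 ?posrE; nra.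
Qed.

Lemma sum_min1_inv_sqr_le (x : nat -> R) (c : R) (q N : nat) :
  (0 < q)%N -> 0 <= c -> (forall a, x a <= 1) ->
  (forall a, x a <= c / (a.+1)%:R ^+ 2) ->
  \sum_(a < N) x a <= q%:R + c / q%:R.
Proof.
move=> q_gt0 c_ge0 x_le1 x_le_inv.
have head k : \sum_(a < k) x a <= k%:R.
  by rewrite -[k in k%:R]card_ord -sumr_const; apply: ler_sum => a _.
have cq_ge0 : 0 <= c / q%:R by rewrite divr_ge0.
case: (leqP N q) => [le_Nq|lt_qN].
  by apply: le_trans (head N) _; rewrite -[X in X <= _]addr0 lerD // ler_nat.
rewrite -(big_mkord xpredT) (big_cat_nat (leq0n q) (ltnW lt_qN)) /= big_mkord.
apply: lerD; first exact: head.
apply: (le_trans (y := \sum_(q <= a < N) (- (c / a.+1%:R) - - (c / a%:R)))).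
  rewrite big_nat_cond [X in _ <= X]big_nat_cond.
  apply: ler_sum => a /andP[/andP[le_qa _] _]; rewrite opprK addrC.
  apply: le_trans (x_le_inv a) _; rewrite -natr1.
  by apply: inv_sqr_le_telescope; rewrite // ler1n (leq_trans q_gt0).
rewrite (telescope_sumr (fun a => - (c / a%:R)) (ltnW lt_qN)) opprK.
have := divr_ge0 c_ge0 (ler0n R N); lra.
Qed.
End InverseSquares.

Section Averaging.
Variables (R : realDomainType) (I : finType) (i0 : I).

Lemma exists_ge_wavg (w F : I -> R) (c : R) : (forall i, 0 < w i) ->
  c * \sum_i w i <= \sum_i w i * F i -> exists i, c <= F i.
Proof.
move=> w_gt0 le_avg; apply/existsP; apply: contraLR le_avg => /existsPn F_lt.
rewrite -ltNge mulr_sumr; apply: ltr_sum; first by apply/hasP; exists i0.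
by move=> i _; rewrite [c * _]mulrC ltr_pM2l // ltNge F_lt.
Qed.

Lemma exists_ge_avg (F : I -> R) (c : R) :
  #|I|%:R * c <= \sum_i F i -> exists i, c <= F i.
Proof.
move=> le_avg; apply: (@exists_ge_wavg (fun=> 1)) => [i|]; first exact: ltr01.
by rewrite sumr_const mulrC; under eq_bigr do rewrite mul1r.
Qed.
End Averaging.

Lemma sum_layer_cake (I : finType) (F : I -> nat) (N : nat) :
  (forall i, F i <= N)%N -> (\sum_i F i = \sum_(a < N) #|[set i | a < F i]|)%N.
Proof.
move=> le_FN.
have layers k : (k <= N)%N -> k = (\sum_(a < N) (a < k))%N.
  suff -> : (\sum_(a < N) (a < k) = minn N k)%N by move/minn_idPr.
  elim: (N) => [|M IH]; first by rewrite big_ord0 min0n.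
  by rewrite big_ord_recr /= IH; case: (ltnP M k) => ?; lia.
transitivity (\sum_i \sum_(a < N) (a < F i))%N.
  by apply: eq_bigr => i _; apply: layers.
rewrite exchange_big /=; apply: eq_bigr => a _.
by rewrite -sum1_card [RHS]big_mkcond /=; apply: eq_bigr => i _; rewrite inE; case: ltnP.
Qed.

Section SignWalk.
Variable n : nat.
Local Notation signs := {ffun 'I_n -> bool}.

Definition bsign (b : bool) : int := if b then 1 else -1.

Definition flip_at (j : 'I_n) (s : signs) : signs :=
  [ffun k => if k == j then ~~ s k else s k].

Lemma flip_atK j : involutive (flip_at j).
Proof.
move=> s; apply/ffunP => k; rewrite !ffunE.
by case: eqP => [->|_]; rewrite ?eqxx ?negbK.
Qed.

Lemma bsign_sqr b : bsign b * bsign b = 1.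
Proof. by case: b. Qed.

Lemma sum_bsign_flip_invariant j (F : signs -> int) :
  (forall s, F (flip_at j s) = F s) -> \sum_(s : signs) F s * bsign (s j) = 0.
Proof.
move=> F_flip; set X := \sum_(s : signs) _.
have : X = - X.
  rewrite {1}/X (reindex_inj (inv_inj (flip_atK j))) -sumrN.
  apply: eq_bigr => s _; rewrite F_flip ffunE eqxx.
  by rewrite /bsign; case: (s j); rewrite /= ?mulrN1 ?mulr1 ?opprK.
lia.
Qed.

Definition walk (rho : 'I_n -> nat) (t : nat) (s : signs) : int :=
  \sum_(j | (rho j < t)%N) bsign (s j).

Definition walk_max (rho : 'I_n -> nat) (B : nat) (s : signs) : nat :=
  \max_(t < B.+1) `|walk rho t s|%N.

Lemma sum_walk_sqr rho t :
  \sum_(s : signs) walk rho t s ^+ 2 = (2 ^ n * #|[pred j | rho j < t]%N|)%:R.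
Proof.
under eq_bigr => s _ do rewrite expr2 big_distrlr /=.
rewrite exchange_big /=; under eq_bigr => j _ do rewrite exchange_big /=.
rewrite -sum1_card natrM natr_sum mulr_sumr; apply: eq_bigr => j lt_j_t.
rewrite (bigD1 j) //= [X in _ + X]big1 ?addr0.
  under eq_bigr => s _ do rewrite bsign_sqr.
  by rewrite sumr_const card_ffun card_bool card_ord mulr1.
move=> k /andP[_ kj]; under eq_bigr => s _ do rewrite mulrC.
by apply: sum_bsign_flip_invariant => s; rewrite ffunE (negbTE kj).
Qed.

Lemma walk_flip_at rho t j s :
  (t <= rho j)%N -> walk rho t (flip_at j s) = walk rho t s.
Proof.
move=> le_t_j; apply: eq_bigr => k lt_k_t; rewrite ffunE.
by case: eqP => // ekj; move: lt_k_t; rewrite ekj ltnNge le_t_j.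
Qed.

Lemma walk_max_le rho B s : (walk_max rho B s <= n)%N.
Proof.
apply/bigmax_leqP => t _.
suff : `|walk rho t s| <= n%:R :> int by lia.
apply: (le_trans (ler_norm_sum _ _ _)).
rewrite (eq_bigr (fun=> 1)) => [|j _]; last by case: (s j); rewrite ?normrN normr1.
by rewrite sumr_const ler_nat -[leqRHS]card_ord max_card.
Qed.

Lemma abs_walk_le_max rho B s t :
  (t <= B)%N -> (`|walk rho t s| <= walk_max rho B s)%N.
Proof.
move=> le_tB; have lt_tB : (t < B.+1)%N := le_tB.
exact: (leq_bigmax (F := fun t : 'I_B.+1 => `|walk rho t s|%N) (Ordinal lt_tB)).
Qed.
End SignWalk.

Section Kolmogorov.
Variables (n : nat) (rho : 'I_n -> nat) (B a : nat).
Local Notation signs := {ffun 'I_n -> bool}.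

Definition first_exit (t : nat) (s : signs) : bool :=
  (a <= `|walk rho t s|)%N && [forall u : 'I_t, (`|walk rho u s| < a)%N].

Lemma first_exit_flip_at t j s :
  (t <= rho j)%N -> first_exit t (flip_at j s) = first_exit t s.
Proof.
move=> le_t_j; rewrite /first_exit walk_flip_at //; congr (_ && _).
by apply: eq_forallb => u; rewrite walk_flip_at // (leq_trans (ltnW (ltn_ord u))).
Qed.

Lemma first_exit_unique t u s : first_exit t s -> first_exit u s -> t = u.
Proof.
have early v w : (v < w)%N -> first_exit v s -> ~~ first_exit w s.
  move=> lt_vw /andP[exit_v _]; apply/nandP; right; apply/forallPn.
  by exists (Ordinal lt_vw); rewrite -leqNgt.
move=> exit_t exit_u; case: (ltngtP t u) => // [lt_tu|lt_ut].
  by move: (early _ _ lt_tu exit_t); rewrite exit_u.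
by move: (early _ _ lt_ut exit_u); rewrite exit_t.
Qed.

Lemma sum_first_exit s :
  (\sum_(t < B.+1) first_exit t s = (a <= walk_max rho B s))%N.
Proof.
case: (leqP a (walk_max rho B s)) => [le_a_max|lt_max_a]; last first.
  apply: big1 => t _; rewrite /first_exit; case: andP => // -[le_a_walk _].
  have := abs_walk_le_max rho s (ltn_ord t : (t <= B)%N).
  by move: lt_max_a; rewrite ltnNge => /negP nle /(leq_trans le_a_walk).
have reach : exists t, (t < B.+1)%N && (a <= `|walk rho t s|)%N.
  suff /existsP[t far_t] : [exists t : 'I_B.+1, (a <= `|walk rho t s|)%N].
    by exists t; rewrite ltn_ord.
  move: le_a_max; apply: contraLR => /existsPn near.
  rewrite -ltnNge; case: a near => [|a'] near; first by have := near ord0.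
  by rewrite ltnS; apply/bigmax_leqP => t _; rewrite leqNgt near.
have [t /andP[lt_tB exit_t] t_min] := ex_minnP reach.
have exit_t' : first_exit t s.
  rewrite /first_exit exit_t; apply/forallP => u; rewrite ltnNge; apply/negP => far_u.
  have := t_min u; rewrite (leq_trans (ltn_ord u) (ltnW lt_tB)) far_u => /(_ isT).
  by rewrite leqNgt ltn_ord.
rewrite (bigD1 (Ordinal lt_tB)) //= exit_t' big1 // => u ne_ut.
apply/eqP; rewrite eqb0; apply: contra ne_ut => exit_u.
by apply/eqP/val_inj; rewrite /= (first_exit_unique exit_u exit_t').
Qed.

Lemma first_exit_sqr_le t : (t <= B)%N ->
  \sum_(s : signs) (first_exit t s)%:R * walk rho t s ^+ 2 <=
  \sum_(s : signs) (first_exit t s)%:R * walk rho B s ^+ 2.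
Proof.
move=> le_tB; pose later s := \sum_(j | (t <= rho j < B)%N) bsign (s j).
have walkB s : walk rho B s = walk rho t s + later s.
  rewrite /walk (bigID (fun j => (rho j < t)%N)) /=; congr (_ + _).
    by apply: eq_bigl => j; apply/andb_idl => lt_j_t; apply: leq_trans lt_j_t le_tB.
  by apply: eq_bigl => j; rewrite -leqNgt andbC.
(* steps after time [t] are independent of the walk stopped at its first exit *)
have cross : \sum_(s : signs) (first_exit t s)%:R * walk rho t s * later s = 0.
  under eq_bigr => s _ do rewrite /later mulr_sumr.
  rewrite exchange_big; apply: big1 => j /andP[le_t_j _].
  by apply: sum_bsign_flip_invariant => s; rewrite first_exit_flip_at ?walk_flip_at.
suff : \sum_(s : signs) (first_exit t s)%:R * walk rho t s ^+ 2 +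
    2 * \sum_(s : signs) (first_exit t s)%:R * walk rho t s * later s <=
    \sum_(s : signs) (first_exit t s)%:R * walk rho B s ^+ 2.
  by rewrite cross mulr0 addr0.
rewrite mulr_sumr -big_split; apply: ler_sum => s _; rewrite walkB.
by case: (first_exit t s); rewrite /= ?mul1r ?mul0r; nia.
Qed.

Lemma kolmogorov_maximal :
  (a%:Z) ^+ 2 * #|[set s | a <= walk_max rho B s]%N|%:R <=
  \sum_(s : signs) walk rho B s ^+ 2.
Proof.
have exit_sqr t s :
    (first_exit t s)%:R * (a%:Z) ^+ 2 <= (first_exit t s)%:R * walk rho t s ^+ 2.
  by case: (boolP (first_exit t s)) => [/andP[far _]|_]; rewrite /= ?mul0r // !mul1r; nia.
have exits s : \sum_(t < B.+1) (first_exit t s)%:R = (a <= walk_max rho B s)%N%:R :> int.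
  by rewrite -natr_sum sum_first_exit.
have -> : (a%:Z) ^+ 2 * #|[set s | a <= walk_max rho B s]%N|%:R =
    \sum_(s : signs) \sum_(t < B.+1) (first_exit t s)%:R * (a%:Z) ^+ 2.
  rewrite -sum1_card natr_sum mulr_sumr big_mkcond /=; apply: eq_bigr => s _.
  by rewrite -mulr_suml exits inE; case: leqP; rewrite /= ?mulr1 ?mul1r ?mul0r.
apply: (le_trans (y := \sum_(t < B.+1) \sum_(s : signs)
                         (first_exit t s)%:R * walk rho t s ^+ 2)).
  by rewrite exchange_big; apply: ler_sum => s _; apply: ler_sum => t _.
apply: (le_trans (y := \sum_(t < B.+1) \sum_(s : signs)
                         (first_exit t s)%:R * walk rho B s ^+ 2)).
  by apply: ler_sum => t _; apply: first_exit_sqr_le; rewrite -ltnS.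
rewrite exchange_big /=; apply: ler_sum => s _.
by rewrite -mulr_suml exits; case: leqP => _; rewrite /= ?mul1r ?mul0r ?sqr_ge0.
Qed.
End Kolmogorov.

Lemma card_walk_max_gt n (rho : 'I_n -> nat) B a :
  (a.+1 ^ 2 * #|[set s | a < walk_max rho B s]%N| <= 2 ^ n * n)%N.
Proof.
have := kolmogorov_maximal rho B a.+1; rewrite sum_walk_sqr.
have := max_card [pred j | rho j < B]%N; rewrite card_ord.
set P := #|_|; set A := #|_|; set w := (2 ^ n)%N; nia.
Qed.

Lemma sum_walk_max_le (R : realType) n (rho : 'I_n -> nat) B :
  \sum_(s : {ffun 'I_n -> bool}) (walk_max rho B s)%:R <=
  (2 ^ n)%:R * (3 * Num.sqrt n%:R) :> R.
Proof.
have pow_gt0 : 0 < (2 ^ n)%:R :> R by rewrite ltr0n expn_gt0.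
pose x a : R := #|[set s | a < walk_max rho B s]%N|%:R / (2 ^ n)%:R.
have -> : \sum_(s : {ffun 'I_n -> bool}) (walk_max rho B s)%:R =
    (2 ^ n)%:R * \sum_(a < n) x a :> R.
  rewrite -natr_sum (sum_layer_cake (walk_max_le rho B)) natr_sum mulr_sumr.
  by apply: eq_bigr => a _; rewrite /x mulrC divfK // gt_eqF.
rewrite ler_pM2l //.
have x_le1 a : x a <= 1.
  rewrite /x ler_pdivrMr // mul1r ler_nat (leq_trans (max_card _)) //.
  by rewrite card_ffun card_bool card_ord.
have x_le_inv a : x a <= n%:R / (a.+1)%:R ^+ 2.
  rewrite /x ler_pdivlMr ?exprn_gt0 ?ltr0n // mulrAC ler_pdivrMr //.
  by rewrite -natrX -!natrM ler_nat mulnC (mulnC n) card_walk_max_gt.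
have [->|n_gt0] := posnP n; first by rewrite big_ord0 sqrtr0 mulr0.
set r := Num.sqrt n%:R.
have r_ge1 : 1 <= r by rewrite -(sqrtr1 R) ler_sqrt ?ler1n.
have r_sqr : r ^+ 2 = n%:R by rewrite sqr_sqrtr ?ler0n.
pose q := (Num.truncn r).+1.
have r_lt_q : r < q%:R by apply: truncnS_gt.
have q_le : q%:R <= r + 1 by rewrite /q -natr1 lerD2r truncn_le sqrtr_ge0.
apply: le_trans (sum_min1_inv_sqr_le n (isT : (0 < q)%N) (ler0n _ _) x_le1 x_le_inv) _.
have : n%:R / q%:R <= r.
  by rewrite ler_pdivrMr -?r_sqr ?expr2 ?ler_wpM2l; lra.
lra.
Qed.

Section Scores.
Variables (V : finType) (m : nat) (ord : 'I_m -> rel V).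

Definition rank (i : 'I_m) (x : V) : nat := #|[set y | ord i y x && (y != x)]|.

Definition score (x v : V) : nat :=
  \sum_(i < m) ((rank i x < rank i v) + (rank i x <= rank i v)).

Lemma score_sym x v : (score x v + score v x = 2 * m)%N.
Proof.
rewrite /score -big_split /= (eq_bigr (fun=> 2%N)) => [|i _]; last first.
  by case: (ltngtP (rank i x) (rank i v)).
by rewrite sum_nat_const card_ord mulnC.
Qed.

Lemma score_le x v : (score x v <= 2 * m)%N.
Proof. by rewrite -(score_sym x v) leq_addr. Qed.

Lemma sum_weighted_score (R : numDomainType) (w : V -> R) :
  \sum_u \sum_v w u * w v * (score u v)%:R = m%:R * (\sum_v w v) ^+ 2.
Proof.
set X := \sum_u _.
apply: (@mulfI _ 2%:R); first by rewrite pnatr_eq0.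
rewrite mulr_natl mulr2n mulrA -natrM.
rewrite {2}/X exchange_big -big_split expr2 mulr_suml mulr_sumr; apply: eq_bigr => u _.
rewrite -big_split mulr_sumr mulr_sumr; apply: eq_bigr => v _ /=.
by rewrite (mulrC (w v)) -mulrDr -natrD score_sym; ring.
Qed.

Section Halving.
Variables (n : nat) (a b : 'I_n -> V).
Local Notation signs := {ffun 'I_n -> bool}.

Definition pick_sides (s : signs) (j : 'I_n) : V := if s j then a j else b j.

Definition halving_loss (s : signs) : nat :=
  \sum_(i < m) (walk_max (fun j => rank i (a j)) #|V|.+1 s +
                walk_max (fun j => rank i (b j)) #|V|.+1 s).

Lemma sum_bsign_score (c : 'I_n -> V) (s : signs) v :
  \sum_j bsign (s j) * (score (c j) v)%:R =
  \sum_(i < m) (walk (fun j => rank i (c j)) (rank i v) s +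
                walk (fun j => rank i (c j)) (rank i v).+1 s).
Proof.
under eq_bigr => j _ do rewrite natr_sum mulr_sumr.
rewrite exchange_big /=; apply: eq_bigr => i _.
rewrite /walk [X in _ = X + _]big_mkcond [X in _ = _ + X]big_mkcond -big_split /=.
apply: eq_bigr => j _.
by rewrite ltnS natrD mulrDr; case: ifP; case: ifP; rewrite ?mulr1 ?mulr0.
Qed.

Lemma score_pick_sides (s : signs) v :
  (\sum_j score (a j) v + \sum_j score (b j) v <=
   2 * \sum_j score (pick_sides s j) v + 2 * halving_loss s)%N.
Proof.
rewrite -(ler_nat int) natrD [X in _ <= X]natrD !natrM -lerBlDl.
have -> : (\sum_j score (a j) v)%:R + (\sum_j score (b j) v)%:R -
    2%:R * (\sum_j score (pick_sides s j) v)%:R =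
    \sum_j bsign (s j) * (score (b j) v)%:R - \sum_j bsign (s j) * (score (a j) v)%:R :> int.
  rewrite !natr_sum mulr_sumr -big_split /= -!sumrB; apply: eq_bigr => j _.
  by rewrite /pick_sides; case: (s j); rewrite /bsign; ring.
rewrite !sum_bsign_score -sumrB /halving_loss natr_sum mulr_sumr.
apply: ler_sum => i _.
have le_rank : (rank i v <= #|V|)%N by apply: max_card.
have := abs_walk_le_max (fun j => rank i (a j)) s (leqW le_rank).
have := abs_walk_le_max (fun j => rank i (a j)) s (le_rank : (rank i v < #|V|.+1)%N).
have := abs_walk_le_max (fun j => rank i (b j)) s (leqW le_rank).
have := abs_walk_le_max (fun j => rank i (b j)) s (le_rank : (rank i v < #|V|.+1)%N).
rewrite natrD; lia.
Qed.

Lemma sum_halving_loss_le (R : realType) :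
  \sum_(s : signs) (halving_loss s)%:R <= (2 ^ n)%:R * (6 * m%:R * Num.sqrt n%:R) :> R.
Proof.
under eq_bigr => s _ do rewrite natr_sum.
have -> : (2 ^ n)%:R * (6 * m%:R * Num.sqrt n%:R) =
    \sum_(i < m) 2 * ((2 ^ n)%:R * (3 * Num.sqrt n%:R)) :> R.
  by rewrite sumr_const card_ord -mulr_natr; ring.
rewrite exchange_big /=; apply: ler_sum => i _; under eq_bigr => s _ do rewrite natrD.
by rewrite big_split mulr_natl mulr2n lerD // sum_walk_max_le.
Qed.

Lemma exists_halving (R : realType) : exists g : 'I_n -> V, forall v,
  (\sum_j score (a j) v + \sum_j score (b j) v)%:R <=
  2 * (\sum_j score (g j) v)%:R + 12 * m%:R * Num.sqrt n%:R :> R.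
Proof.
have [s loss_s] : exists s : signs, - (6 * m%:R * Num.sqrt n%:R) <= - (halving_loss s)%:R :> R.
  apply: (exists_ge_avg [ffun=> true]); rewrite card_ffun card_bool card_ord sumrN.
  by rewrite mulrN lerN2 sum_halving_loss_le.
exists (pick_sides s) => v; have := score_pick_sides s v.
by rewrite -(ler_nat R) natrD [X in _ <= X]natrD !natrM; lra.
Qed.
End Halving.
End Scores.

Section RepeatedHalving.
Variables (R : realType) (V : finType) (m : nat) (ord : 'I_m -> rel V).

Lemma sqrt_double_le (K : nat) : 2 * Num.sqrt (K + K)%:R <= 3 * Num.sqrt K%:R :> R.
Proof.
have s_ge0 := sqrtr_ge0 (K%:R : R); have s2_ge0 := sqrtr_ge0 ((K + K)%:R : R).
have : Num.sqrt (K + K)%:R ^+ 2 = 2 * Num.sqrt K%:R ^+ 2 :> R.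
  by rewrite !sqr_sqrtr ?ler0n // natrD; ring.
nra.
Qed.

Lemma halve_repeatedly (K L N : nat) (beta : R) (f : 'I_N -> V) :
  (0 < K)%N -> N = (K * 2 ^ L)%N ->
  (forall v, beta * N%:R <= (\sum_k score ord (f k) v)%:R) ->
  exists g : 'I_K -> V, forall v,
    (beta - 24 * m%:R / Num.sqrt K%:R) * K%:R <= (\sum_j score ord (g j) v)%:R.
Proof.
elim: L K N beta f => [|L IH] K N beta f K_gt0 eN score_f.
  move: eN score_f; rewrite expn0 muln1 => eN; subst N => score_f.
  exists f => v; apply: le_trans (score_f v).
  by rewrite ler_wpM2r ?ler0n // lerBlDr lerDl divr_ge0 ?sqrtr_ge0 // mulr_ge0 ?ler0n.
have eN2 : N = ((K + K) * 2 ^ L)%N by rewrite eN expnS mulnA muln2 addnn.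
have [g2 score_g2] := IH (K + K)%N N beta f (ltn_addl K K_gt0) eN2 score_f.
have [g score_g] := exists_halving ord (fun j => g2 (lshift K j)) (fun j => g2 (rshift K j)) R.
exists g => v; have := score_g v; have := score_g2 v; rewrite big_split_ord /=.
set s := Num.sqrt K%:R; set s2 := Num.sqrt (K + K)%:R.
have s_gt0 : 0 < s by rewrite sqrtr_gt0 ltr0n.
have s2_gt0 : 0 < s2 by rewrite sqrtr_gt0 ltr0n addn_gt0 K_gt0.
have sK : 24 * m%:R / s * K%:R = 24 * m%:R * s.
  by rewrite -[K%:R](@sqr_sqrtr R) ?ler0n // -/s; field; rewrite gt_eqF.
have s2K : 24 * m%:R / s2 * (K + K)%:R = 24 * m%:R * s2.
  by rewrite -[(K + K)%:R](@sqr_sqrtr R) ?ler0n // -/s2; field; rewrite gt_eqF.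
have : m%:R * (2 * s2) <= m%:R * (3 * s) by rewrite ler_wpM2l ?ler0n ?sqrt_double_le.
rewrite natrD in s2K *; rewrite !mulrBl sK; lra.
Qed.
End RepeatedHalving.

Section MultiplicativeWeights.
Variables (R : realType) (V : finType) (m : nat) (ord : 'I_m -> rel V) (theta : R).
Hypotheses (m_gt0 : (0 < m)%N) (theta_gt0 : 0 < theta) (theta_le : theta <= 1 / 2).

Definition weight (s : seq V) (v : V) : R :=
  ((1 + theta / m%:R) ^+ (\sum_(u <- s) score ord u v))^-1.

Definition potential (s : seq V) : R := \sum_v weight s v.

Lemma theta_div_m_gt0 : 0 < theta / m%:R.
Proof. by rewrite divr_gt0 ?ltr0n. Qed.

Lemma weight_gt0 s v : 0 < weight s v.
Proof. by rewrite invr_gt0 exprn_gt0 // ltr_wpDr ?ltW ?theta_div_m_gt0. Qed.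

Lemma weight_le_potential s v : weight s v <= potential s.
Proof.
by rewrite /potential (bigD1 v) //= lerDl sumr_ge0 // => u _; rewrite ltW ?weight_gt0.
Qed.

Lemma exists_heavy (x0 : V) s :
  exists u, m%:R * potential s <= \sum_v weight s v * (score ord u v)%:R.
Proof.
apply: (exists_ge_wavg x0 (w := weight s)) => [u|]; first exact: weight_gt0.
rewrite /potential -mulrA -expr2 -(sum_weighted_score ord).
under [in X in _ <= X]eq_bigr => u _ do rewrite mulr_sumr.
by under eq_bigr do under eq_bigr do rewrite mulrA.
Qed.

Lemma potential_step (x0 : V) s :
  exists u, potential (u :: s) <= potential s * (1 - theta + 2 * theta ^+ 2).
Proof.
have [u heavy_u] := exists_heavy x0 s; exists u.
set c := theta / m%:R; have c_gt0 : 0 < c := theta_div_m_gt0.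
have mc : m%:R * c = theta by rewrite /c mulrC divfK // lt0r_neq0 ?ltr0n.
apply: (le_trans (y := \sum_v weight s v * (1 - c * (score ord u v)%:R +
                      (2 * m)%:R * c ^+ 2 * (score ord u v)%:R))).
  apply: ler_sum => v _; rewrite /weight big_cons exprD invfM mulrC -/c.
  rewrite ler_wpM2l ?(ltW (weight_gt0 _ _)) //.
  by apply: inv_pow_le_quadratic; [exact: ltW | rewrite ler_nat score_le].
have damp : c - (2 * m)%:R * c ^+ 2 = c * (1 - 2 * theta) by rewrite -mc natrM; ring.
have damp_ge0 : 0 <= c - (2 * m)%:R * c ^+ 2.
  by rewrite damp; apply: mulr_ge0; [exact: ltW | have := theta_le; lra].
have := ler_wpM2l damp_ge0 heavy_u.
have -> : (c - (2 * m)%:R * c ^+ 2) * (m%:R * potential s) =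
    (theta - 2 * theta ^+ 2) * potential s by rewrite damp -mc; ring.
have -> : \sum_v weight s v * (1 - c * (score ord u v)%:R +
                                (2 * m)%:R * c ^+ 2 * (score ord u v)%:R) =
    potential s - (c - (2 * m)%:R * c ^+ 2) * \sum_v weight s v * (score ord u v)%:R.
  by rewrite /potential mulr_sumr -sumrB; apply: eq_bigr => v _; ring.
have -> : potential s * (1 - theta + 2 * theta ^+ 2) =
    potential s - (theta - 2 * theta ^+ 2) * potential s by ring.
exact: lerB.
Qed.

Lemma potential_bound (x0 : V) T : exists s, size s = T /\
  potential s <= #|V|%:R * (1 - theta + 2 * theta ^+ 2) ^+ T.
Proof.
elim: T => [|T [s [size_s pot_s]]].
  exists [::]; split => //; rewrite expr0 mulr1 /potential.
  by under eq_bigr do rewrite /weight big_nil expr0 invr1; rewrite sumr_const.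
have [u step_u] := potential_step x0 s.
exists (u :: s); split; first by rewrite /= size_s.
have q_ge0 : 0 <= 1 - theta + 2 * theta ^+ 2 by have := theta_le; nra.
by apply: le_trans step_u _; rewrite (exprSr _ T) mulrA; apply: ler_wpM2r.
Qed.

Lemma weight_ge s v k : (\sum_(u <- s) score ord u v < m * k)%N ->
  (1 - theta) ^+ k <= weight s v.
Proof.
set c := theta / m%:R; have c_gt0 : 0 < c := theta_div_m_gt0.
have mc : m%:R * c = theta by rewrite /c mulrC divfK // lt0r_neq0 ?ltr0n.
have theta_lt1 : 0 < 1 - theta by have := theta_le; lra.
have c1_gt0 : 0 < 1 + c by rewrite ltr_wpDl.
have base_le : (1 + c) ^+ m <= (1 - theta)^-1.
  rewrite -(ler_pM2l theta_lt1) mulfV ?lt0r_neq0 //.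
  by have := bernoulli_inv m (ltW c_gt0); rewrite mc.
move=> small; rewrite /weight -/c -[X in X <= _]invrK.
rewrite lef_pV2 ?posrE ?invr_gt0 ?exprn_gt0 //.
apply: (le_trans (y := (1 + c) ^+ (m * k))).
  by rewrite ler_eXn2l ?ltrDl // ltnW.
rewrite exprM -exprVn; apply: lerXn2r => //; rewrite nnegrE.
  by rewrite exprn_ge0 // ltW.
by rewrite invr_ge0 ltW.
Qed.
End MultiplicativeWeights.

Section Cover.
Variables (R : realType) (V : finType) (m : nat) (ord : 'I_m -> rel V).

Lemma exists_score_multiset (x0 : V) (r : nat) : (0 < m)%N -> (0 < r)%N ->
  exists T0, forall T, (T0 <= T)%N -> exists s : seq V, size s = (r * T)%N /\
    forall v, (1 - r%:R^-1) * m%:R * (size s)%:R <= (\sum_(u <- s) score ord u v)%:R :> R.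
Proof.
move=> m_gt0 r_gt0; have r_ge1 : 1 <= r%:R :> R by rewrite ler1n.
set theta : R := (4 * r%:R)^-1.
have thetaE : theta * (4 * r%:R) = 1 by rewrite mulVf // lt0r_neq0 //; lra.
have theta_gt0 : 0 < theta by rewrite invr_gt0; lra.
have theta_le : theta <= 1 / 2 by nra.
set q := 1 - theta + 2 * theta ^+ 2.
have q_lt : q ^+ r < (1 - theta) ^+ r.-1.
  by rewrite -{1}(prednK r_gt0) pow_rate_lt // prednK //; nra.
have pow_gt0 k : 0 < (1 - theta) ^+ k by rewrite exprn_gt0 // subr_gt0; lra.
set rho := q ^+ r / (1 - theta) ^+ r.-1.
have q_gt0 : 0 < q by rewrite /q; have := sqr_ge0 theta; lra.
have rho_gt0 : 0 < rho by rewrite divr_gt0 // exprn_gt0.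
have rho_lt1 : rho < 1 by rewrite ltr_pdivrMr // mul1r.
have [T0 small] := exists_pow_lt #|V|%:R rho_gt0 rho_lt1.
exists T0 => T le_T0T.
have [s [size_s pot_s]] := potential_bound ord m_gt0 theta_gt0 theta_le x0 (r * T).
exists s; split => // v.
have le_S : (m * (r.-1 * T) <= \sum_(u <- s) score ord u v)%N.
  rewrite leqNgt; apply/negP => /(weight_ge m_gt0 theta_gt0 theta_le) low.
  have := le_trans low (le_trans (weight_le_potential ord m_gt0 theta_gt0 s v) pot_s).
  have -> : q ^+ (r * T) = (1 - theta) ^+ (r.-1 * T) * rho ^+ T.
    by rewrite !exprM -exprMn /rho mulrC divfK // lt0r_neq0.
  by rewrite mulrCA -[X in X <= _]mulr1 ler_pM2l // leNgt small.
apply: le_trans (_ : _ <= (m * (r.-1 * T))%:R) _; last by rewrite ler_nat.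
rewrite size_s -subn1 !natrM natrB //.
suff -> : (1 - r%:R^-1) * m%:R * (r%:R * T%:R) = m%:R * ((r%:R - 1) * T%:R) :> R by [].
by field; rewrite lt0r_neq0 //; lra.
Qed.

Lemma exists_score_cover (x0 : V) (r : nat) : (0 < m)%N -> (0 < r)%N ->
  exists g : 'I_((24 * r) ^ 2) -> V, forall v,
    (1 - 2 / r%:R) * m%:R * ((24 * r) ^ 2)%:R <= (\sum_j score ord (g j) v)%:R :> R.
Proof.
move=> m_gt0 r_gt0; set K := ((24 * r) ^ 2)%N.
have K_gt0 : (0 < K)%N by rewrite expn_gt0 muln_gt0 r_gt0.
have [T0 multiset] := exists_score_multiset x0 m_gt0 r_gt0.
have le_T0 : (T0 <= 24 ^ 2 * r * 2 ^ T0)%N.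
  by have := ltn_expl T0 (isT : (1 < 2)%N); set w := (2 ^ T0)%N; nia.
have [s [size_s score_s]] := multiset _ le_T0.
have eN : size s = (K * 2 ^ T0)%N by rewrite size_s /K; ring.
have score_nth v : (1 - r%:R^-1) * m%:R * (size s)%:R <=
    (\sum_(k < size s) score ord (nth x0 s k) v)%:R :> R.
  by have := score_s v; rewrite (big_nth x0) big_mkord.
have [g score_g] := halve_repeatedly K_gt0 eN score_nth.
exists g => v; apply: le_trans (score_g v).
have r_gt0' : 0 < r%:R :> R by rewrite ltr0n.
have -> : Num.sqrt K%:R = 24 * r%:R :> R.
  by rewrite /K natrX sqrtr_sqr natrM ger0_norm // mulr_ge0 ?ler0n // ltW.
suff -> : (1 - r%:R^-1) * m%:R - 24 * m%:R / (24 * r%:R) = (1 - 2 / r%:R) * m%:R :> R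
  by [].
by field; rewrite lt0r_neq0.
Qed.
End Cover.

Section LinearOrders.
Variables (V : finType) (m : nat) (ord : 'I_m -> rel V).
Hypothesis ord_linear : forall i, linear_order (ord i).

Lemma rank_lt_of i x v : ord i x v -> x != v -> (rank ord i x < rank ord i v)%N.
Proof.
move=> le_xv ne_xv; have [_ anti trans _] := ord_linear i.
apply: proper_card; apply/properP; split.
  apply/subsetP => y; rewrite !inE => /andP[le_yx ne_yx].
  rewrite (trans _ _ _ le_yx le_xv); apply: contra ne_xv => /eqP eq_yv.
  by apply/eqP/anti; rewrite le_xv -eq_yv le_yx.
by exists x; rewrite !inE ?le_xv ?ne_xv ?eqxx ?andbF.
Qed.

Lemma rank_lt i x v : x != v -> (rank ord i x < rank ord i v)%N = ord i x v.
Proof.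
move=> ne_xv; case: (boolP (ord i x v)) => [le_xv|nle_xv]; first exact: rank_lt_of.
have [_ _ _ tot] := ord_linear i.
have le_vx : ord i v x by move: (tot x v); rewrite (negbTE nle_xv).
by apply/negbTE; rewrite -leqNgt ltnW // rank_lt_of // eq_sym.
Qed.

Lemma rank_le i x v : x != v -> (rank ord i x <= rank ord i v)%N = ord i x v.
Proof.
move=> ne_xv; rewrite leq_eqVlt rank_lt // orb_idl // => /eqP eq_rank.
have [_ _ _ tot] := ord_linear i; move: (tot x v); case/orP => // le_vx.
by have := rank_lt_of le_vx; rewrite eq_sym ne_xv eq_rank ltnn => /(_ isT).
Qed.

Lemma score_nb_below x v : x != v -> score ord x v = (2 * nb_below ord x v)%N.
Proof.
move=> ne_xv; rewrite /score /nb_below -sum1_card big_distrr [RHS]big_mkcond /=.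
by apply: eq_bigr => i _; rewrite rank_lt // rank_le // inE ne_xv andbT; case: (ord i x v).
Qed.
End LinearOrders.

Lemma domination_number_le (V : finType) (E : rel V) (X : {set V}) :
  dominating E X -> (domination_number E <= #|X|)%N.
Proof.
move=> dom_X; rewrite /domination_number; move: (mem_index_enum X).
elim: (index_enum _) => //= Y r IH; rewrite inE big_cons.
case/predU1P => [<-|in_r]; first by rewrite dom_X geq_minl.
by case: ifP => _; rewrite ?(leq_trans (geq_minr _ _)) ?IH.
Qed.

Lemma dominating_of_score (R : realType) (V : finType) m (ord : 'I_m -> rel V)
    (c : R) K (g : 'I_K -> V) :
  (0 < K)%N -> (forall i, linear_order (ord i)) ->
  (forall v, 2 * c * m%:R * K%:R <= (\sum_j score ord (g j) v)%:R) ->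
  dominating (majority_arc c ord) [set g j | j in 'I_K].
Proof.
move=> K_gt0 ord_linear score_g; apply/forallP => v.
have [j score_j] : exists j, 2 * c * m%:R <= (score ord (g j) v)%:R.
  by apply: (exists_ge_avg (Ordinal K_gt0)); rewrite card_ord -natr_sum mulrC.
case: (eqVneq (g j) v) => [<-|ne_gv]; first by rewrite imset_f.
apply/orP; right; apply/existsP; exists (g j); rewrite imset_f //= /majority_arc ne_gv.
by move: score_j; rewrite score_nb_below // natrM -mulrA ler_pM2l.
Qed.

Lemma exists_inv_nat_lt (R : realType) (eps : R) : 0 < eps -> eps < 1 / 2 ->
  exists r : nat, [/\ (0 < r)%N, r%:R^-1 < eps & ((24 * r) ^ 2)%:R <= 1296 / eps ^+ 2].
Proof.
move=> eps_gt0 eps_lt; exists (Num.truncn eps^-1).+1; split => //.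
  by have := truncnS_gt eps^-1; rewrite -ltf_pV2 ?posrE ?invr_gt0 ?ltr0n // invrK.
set r := (Num.truncn eps^-1).+1.
have r_le : r%:R <= eps^-1 + 1 by rewrite /r -natr1 lerD2r truncn_le invr_ge0 ltW.
have r_eps : r%:R * eps <= 3 / 2.
  have := ler_wpM2r (ltW eps_gt0) r_le; rewrite mulrDl mulVf ?lt0r_neq0 //; lra.
rewrite ler_pdivlMr ?exprn_gt0 // natrX natrM -exprMn -mulrA.
have : 0 <= r%:R * eps by rewrite mulr_ge0 ?ler0n ?ltW.
nra.
Qed.

Theorem theorem1p15 (R : realType) :
  exists C : R, 0 < C /\
    forall (eps : R) (m : nat) (V : finType) (ord : 'I_m -> rel V),
      0 < eps -> eps < 1 / 2 -> (1 <= m)%N ->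
      (forall i, linear_order (ord i)) ->
      (domination_number (majority_arc (1 / 2 - eps) ord))%:R <= C / (eps ^+ 2).
Proof.
exists 1296; split => [|eps m V ord eps_gt0 eps_lt m_gt0 ord_linear]; first lra.
have bound_ge0 : 0 <= 1296 / eps ^+ 2 :> R by rewrite divr_ge0 ?sqr_ge0.
case: (pickP (fun _ : V => true)) => [x0 _|V0]; last first.
  have dom0 : dominating (majority_arc (1 / 2 - eps) ord) set0.
    by apply/forallP => v; have := V0 v.
  by have := domination_number_le dom0; rewrite cards0 leqn0 => /eqP ->.
have [r [r_gt0 inv_r_lt K_le]] := exists_inv_nat_lt eps_gt0 eps_lt.
have [g score_g] := exists_score_cover R ord x0 m_gt0 r_gt0.
have dom : dominating (majority_arc (1 / 2 - eps) ord) [set g j | j in 'I_((24 * r) ^ 2)].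
  apply: (dominating_of_score (g := g)); rewrite ?expn_gt0 ?muln_gt0 ?r_gt0 // => v.
  apply: le_trans (score_g v); rewrite ler_wpM2r ?ler0n // ler_wpM2r ?ler0n //.
  lra.
apply: le_trans K_le; rewrite ler_nat (leq_trans (domination_number_le dom)) //.
by rewrite (leq_trans (leq_imset_card _ _)) ?card_ord.
Qed.
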